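(* Let $A$ be an irreducible $\{0,1\}$-matrix which is not a permutation matrix, and let $\mathcal{C}$ be a right Markov code for $(X_A,\sigma_A)$. Then the matrix $A(\mathcal{C})$ is irreducible and is not a permutation matrix.
   Context: For an $N\times N$ matrix $A$ with entries in $\{0,1\}$, $\Sigma_A=\{1,\dots,N\}$, $X_A$ is the set of sequences $(x_n)_{n\in\mathbb{N}}$ in $\Sigma_A$ with $A(x_n,x_{n+1})=1$ for all $n$, with shift $\sigma_A$. $B_k(X_A)$ is the set of admissible words of length $k$, $B_*(X_A)$ the union over $k\ge0$ (including the empty word). For a word $w=w_1\cdots w_\ell$, $\sigma_A(w)=w_2\cdots w_\ell$. A code is a nonempty $\mathcal{C}\subset B_*(X_A)$ such that any equality of concatenations $\omega(i_1)\cdots\omega(i_k)=\omega(j_1)\cdots\omega(j_n)$ of words of $\mathcal{C}$ forces $n=k$ and $\omega(i_m)=\omega(j_m)$ for all $m$; a prefix code is a code in which no word is a prefix of another. A finite prefix code $\mathcal{C}=\{\omega(1),\dots,\omega(M)\}\subset B_*(X_A)$, $\Sigma_{A(\mathcal{C})}=\{1,\dots,M\}$, is a right Markov code for $(X_A,\sigma_A)$ if: (i) for every $\gamma\in B_*(X_A)$ there is $\eta\in B_*(X_A)$ with $\gamma\eta\in B_*(X_A)$ and a unique finite sequence $(i_1,\dots,i_k)$ in $\Sigma_{A(\mathcal{C})}$ with $\gamma\eta=\omega(i_1)\cdots\omega(i_k)$; (ii) there is $L\in\mathbb{N}$ such that for all $i_1,\dots,i_L$ with $\omega(i_1)\cdots\omega(i_L)\in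 B_*(X_A)$ there exist $j_1,\dots,j_k\in\Sigma_{A(\mathcal{C})}$ with $\sigma_A(\omega(i_1))\omega(i_2)\cdots\omega(i_L)=\omega(j_1)\cdots\omega(j_k)$; (iii) for every $i,j$ there are $n_1,\dots,n_l$ with $\omega(i)\omega(n_1)\cdots\omega(n_l)\omega(j)\in B_*(X_A)$. $A(\mathcal{C})$ is the $M\times M$ $\{0,1\}$-matrix with $A(\mathcal{C})(i,j)=A(r(\omega(i)),s(\omega(j)))$, where $s(\omega(i))$, $r(\omega(i))$ are the first and last symbols of $\omega(i)$; equivalently $A(\mathcal{C})(i,j)=1$ iff $\omega(i)\omega(j)\in B_*(X_A)$. *)

From mathcomp Require Import all_boot all_order all_algebra all_fingroup.
Set Implicit Arguments. Unset Strict Implicit. Unset Printing Implicit Defensive.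

Definition zero_one_matrix (N : nat) (A : 'M[nat]_N) : Prop :=
  forall i j, A i j <= 1.

(* Irreducible: for all i, j there is n >= 1 with A^n(i,j) > 0, i.e. a path
   i = p_0 -> p_1 -> ... -> p_n = j of length n >= 1 with A(p_m,p_{m+1}) = 1. *)
Definition irreducible_mx (N : nat) (A : 'M[nat]_N) : Prop :=
  forall i j : 'I_N, exists s : seq 'I_N,
    s != [::] /\ path (fun a b => A a b == 1) i s /\ last i s = j.

Definition permutation_mx (N : nat) (A : 'M[nat]_N) : Prop :=
  exists s : 'S_N, forall i j, A i j = nat_of_bool (s i == j).

Definition in_XA (N : nat) (A : 'M[nat]_N) (x : nat -> 'I_N) : Prop :=
  forall n, A (x n) (x n.+1) = 1.

Definition admissible (N : nat) (A : 'M[nat]_N) (w : seq 'I_N) : Prop :=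
  w = [::] \/
  exists (x : nat -> 'I_N) (n : nat),
    in_XA A x /\ w = [seq x (n + k) | k <- iota 0 (size w)].

Definition concat_code (N M : nat) (omega : 'I_M -> seq 'I_N) (ks : seq 'I_M)
  : seq 'I_N := flatten (map omega ks).

Definition is_code (N M : nat) (A : 'M[nat]_N) (omega : 'I_M -> seq 'I_N) : Prop :=
  [/\ 0 < M, injective omega, (forall i, admissible A (omega i)) &
      forall ks ls : seq 'I_M, concat_code omega ks = concat_code omega ls ->
        size ks = size ls /\ map omega ks = map omega ls].

Definition is_prefix_code (N M : nat) (A : 'M[nat]_N) (omega : 'I_M -> seq 'I_N) : Prop :=
  is_code A omega /\ forall i j, i != j -> ~~ prefix (omega i) (omega j).

Definition right_Markov_code (N M : nat) (A : 'M[nat]_N) (omega : 'I_M -> seq 'I_N)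
  : Prop :=
  [/\ is_prefix_code A omega,
      (forall gamma, admissible A gamma ->
         exists eta, admissible A eta /\ admissible A (gamma ++ eta) /\
           exists ks, gamma ++ eta = concat_code omega ks /\
             forall ls, gamma ++ eta = concat_code omega ls -> ls = ks),
      (exists L, 0 < L /\
         forall (i1 : 'I_M) (rest : seq 'I_M), size rest = L.-1 ->
           admissible A (concat_code omega (i1 :: rest)) ->
           exists ls, behead (omega i1) ++ concat_code omega rest
                      = concat_code omega ls) &
      (forall i j, exists ns : seq 'I_M,
         admissible A (omega i ++ concat_code omega ns ++ omega j))].

(* A(C)(i,j) = A(r(omega i), s(omega j)), r = last symbol, s = first symbol
   (code words are nonempty; the default 0 ks never used for codes). *)
Definition code_matrix (N M : nat) (A : 'M[nat]_N) (omega : 'I_M -> seq 'I_N)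
  : 'M[nat]_M :=
  \matrix_(i, j) match rev (omega i), omega j with
                 | r :: _, s :: _ => A r s
                 | _, _ => 0
                 end.

(* A branching vertex a -> b, a -> c (b <> c) of A together with a cycle
   a -> b -> ... -> a gives the admissible words a (b...a)^m c, pairwise
   incomparable for the prefix order.  Each of them extends to a concatenation
   of code words, and consecutive code words are linked in A(C).  If A(C) were
   the matrix of a permutation sigma, such a concatenation would be determined
   by its first code word k, as the concatenation along the sigma-orbit of k;
   words with the same k would then be prefix-comparable.  Hence m |-> k is
   injective on the M + 1 words m = 0, ..., M, which is impossible.
   Irreducibility of A(C) is condition (iii) read through the same linking of
   consecutive code words. *)

From mathcomp Require Import all_boot all_order all_algebra all_fingroup.
Set Implicit Arguments. Unset Strict Implicit. Unset Printing Implicit Defensive.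

Lemma prefix_total (T : eqType) (u v z : seq T) :
  prefix u z -> prefix v z -> prefix u v || prefix v u.
Proof.
wlog le_uv : u v / size u <= size v.
  move=> W uz vz; case: (leqP (size u) (size v)) => [|/ltnW] le; first exact: W.
  by rewrite orbC; apply: W.
rewrite !prefixE => /eqP uz /eqP vz.
by rewrite -vz take_takel // uz eqxx.
Qed.

Section LoopWords.
Variable T : eqType.

Definition loop_word (a : T) (C : seq T) (c : T) (m : nat) : seq T :=
  a :: flatten (nseq m C) ++ [:: c].

Lemma last_flatten_nseq (a : T) C m :
  last a C = a -> last a (flatten (nseq m C)) = a.
Proof. by move=> lastC; elim: m => //= m IHm; rewrite last_cat lastC. Qed.

Lemma path_flatten_nseq (e : rel T) (a : T) C m :
  path e a C -> last a C = a -> path e a (flatten (nseq m C)).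
Proof.
move=> eC lastC; elim: m => //= m IHm.
by rewrite cat_path eC lastC IHm.
Qed.

Lemma loop_word_prefix_total_eq (a b c : T) t m m' : b != c ->
  prefix (loop_word a (b :: t) c m) (loop_word a (b :: t) c m') ||
  prefix (loop_word a (b :: t) c m') (loop_word a (b :: t) c m) -> m = m'.
Proof.
wlog lt_mm' : m m' / m < m'.
  move=> W neq_bc cmp; case: (ltngtP m m') => [lt|lt|//]; first exact: W.
  by apply/esym/(W _ _ lt neq_bc); rewrite orbC.
move=> neq_bc; have [d ->] : exists d, m' = m + d.+1.
  by exists (m' - m).-1; rewrite prednK ?subn_gt0 // subnKC // ltnW.
rewrite /loop_word nseqD flatten_cat /= -!catA eqxx !prefix_catr //=.
by rewrite [c == b]eq_sym (negbTE neq_bc) !andbF.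
Qed.

End LoopWords.

Section AdmissibleWords.
Variables (N : nat) (A : 'M[nat]_N).

Local Notation edge := (fun a b => A a b == 1).

Lemma irreducible_mx_succ : irreducible_mx A -> forall i, exists j, A i j = 1.
Proof.
by move=> irrA i; have [[|j s] [//= _ [/andP [/eqP Aij _] _]]] := irrA i i; exists j.
Qed.

Lemma irreducible_mx_pred : irreducible_mx A -> forall j, exists i, A i j = 1.
Proof.
move=> irrA j; have [s [+ [+ +]]] := irrA j j.
case/lastP: s => [//|s i] _; rewrite rcons_path last_rcons => /andP [_ /eqP Aij] <-.
by exists (last j s).
Qed.

Lemma admissible_nth w d i : admissible A w -> i.+1 < size w ->
  A (nth d w i) (nth d w i.+1) = 1.
Proof.
case=> [->//|[x [n [Ax w_def]]]] lt_i; rewrite w_def.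
by rewrite !(nth_map 0) ?size_iota ?(ltnW lt_i) // !nth_iota ?(ltnW lt_i) // !add0n addnS.
Qed.

Lemma admissible_edge pre r s post :
  admissible A (pre ++ r :: s :: post) -> A r s = 1.
Proof.
move=> /(admissible_nth r (i := size pre)).
rewrite !nth_cat ltnn subnn (ltnNge (size pre).+1 (size pre)) leqnSn subSnn size_cat /=; apply.
by rewrite !addnS !ltnS leq_addr.
Qed.

(* Admissibility asks for an infinite continuation, which a nonzero row
   always provides. *)
Lemma path_admissible : (forall i, exists j, A i j = 1) ->
  forall a s, path edge a s -> admissible A (a :: s).
Proof.
move=> /fin_all_exists [succ Asucc] a s as_path; right.
pose x k := if k <= size s then nth a (a :: s) k
            else iter (k - size s) succ (last a s).
exists x, 0; split.
  move=> k; rewrite /x; case: (ltngtP k (size s)) => [lt_k | gt_k | ->].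
  - by move/(pathP a): as_path => /(_ k lt_k) /eqP.
  - by rewrite subSn ?(ltnW gt_k).
  - by rewrite subSnn -[last a s](nth_last a (a :: s)).
apply: (@eq_from_nth _ a); first by rewrite size_map size_iota.
move=> i lt_i; rewrite (nth_map 0) ?size_iota // nth_iota // /x add0n.
by rewrite -ltnS lt_i.
Qed.

Lemma not_permutation_mx_branching :
  zero_one_matrix A -> irreducible_mx A -> ~ permutation_mx A ->
  exists a b c, [/\ b != c, A a b = 1 & A a c = 1].
Proof.
move=> zoA irrA notpermA.
have [/existsP [a /existsP [b /existsP [c /and3P [neq_bc /eqP Aab /eqP Aac]]]]
     | no_branch] :=
  boolP [exists a, exists b, exists c, [&& b != c, A a b == 1 & A a c == 1]].
  by exists a, b, c.
have [succ Asucc] := fin_all_exists (irreducible_mx_succ irrA).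
have succ_uniq i j : A i j = 1 -> j = succ i.
  move=> Aij; apply/eqP; apply: contraR no_branch => neq_j.
  by apply/existsP; exists i; apply/existsP; exists j; apply/existsP; exists (succ i);
     rewrite neq_j Aij Asucc eqxx.
have succ_inj : injective succ.
  have /image_injP inj_in : #|image succ 'I_N| == #|'I_N|.
    rewrite [X in X == _]eq_cardT ?[X in _ == X]eq_cardT // => j.
    by have [i /succ_uniq ->] := irreducible_mx_pred irrA j; apply: codom_f.
  by move=> i i'; apply: inj_in.
exfalso; apply: notpermA; exists (perm succ_inj) => i j; rewrite permE.
have [<-|neq_j] := eqVneq; first by rewrite Asucc.
have := zoA i j; case Aij: (A i j) => [//|[|//]] _.
by rewrite (succ_uniq _ _ Aij) eqxx in neq_j.
Qed.

End AdmissibleWords.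

Section Codes.
Variables (N M : nat) (A : 'M[nat]_N) (omega : 'I_M -> seq 'I_N).

Local Notation code_edge := (fun i j => code_matrix A omega i j == 1).

Definition code_completable : Prop :=
  forall gamma, admissible A gamma ->
  exists eta, admissible A (gamma ++ eta) /\
              exists ks, gamma ++ eta = concat_code omega ks.

Lemma code_word_neq_nil : is_code A omega -> forall i, omega i != [::].
Proof.
by case=> _ _ _ uniq_dec i; apply/eqP => omega_i; case: (uniq_dec [:: i] [::]);
   rewrite /concat_code /= ?omega_i.
Qed.

Lemma admissible_code_path : is_code A omega ->
  forall pre k ks, admissible A (pre ++ concat_code omega (k :: ks)) ->
  path code_edge k ks.
Proof.
move=> codeC pre k ks; elim: ks k pre => [//|k' ks IHks] k pre adm /=.
apply/andP; split; last first.
  by apply: (IHks k' (pre ++ omega k)); move: adm; rewrite /concat_code /= catA.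
move: (code_word_neq_nil codeC k) (code_word_neq_nil codeC k') adm.
case/lastP E: (omega k) => [//|p r] _; case E': (omega k') => [//|s q] _.
rewrite mxE E E' rev_rcons /concat_code /= E E' -cats1 -!catA /= catA.
by move/admissible_edge => ->.
Qed.

Lemma code_matrix_irreducible : is_code A omega ->
  (forall i j, exists ns, admissible A (omega i ++ concat_code omega ns ++ omega j)) ->
  irreducible_mx (code_matrix A omega).
Proof.
move=> codeC connC i j; have [ns adm] := connC i j.
exists (ns ++ [:: j]); split; first by case: ns {adm}.
split; last by rewrite last_cat.
apply: (admissible_code_path codeC (pre := [::])).
by move: adm; rewrite /concat_code /= map_cat flatten_cat /= cats0.
Qed.

Lemma concat_traject_prefix (sigma : 'I_M -> 'I_M) k n n' : n <= n' ->
  prefix (concat_code omega (traject sigma k n))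
         (concat_code omega (traject sigma k n')).
Proof.
by move=> /subnKC <-; rewrite trajectD /concat_code map_cat flatten_cat prefix_prefix.
Qed.

Lemma concat_traject_prefix_total (sigma : 'I_M -> 'I_M) k n n' u v :
  prefix u (concat_code omega (traject sigma k n)) ->
  prefix v (concat_code omega (traject sigma k n')) ->
  prefix u v || prefix v u.
Proof.
wlog le_nn' : n n' u v / n <= n'.
  move=> W pu pv; case: (leqP n n') => [|/ltnW] le; first exact: W pu pv.
  by rewrite orbC; apply: W pv pu.
move=> pu; apply: prefix_total.
exact: prefix_trans pu (concat_traject_prefix _ _ le_nn').
Qed.

Section PermutationCodeMatrix.
Variable sigma : 'I_M -> 'I_M.
Hypothesis codeC : is_code A omega.
Hypothesis code_matrix_sigma :
  forall i j, code_matrix A omega i j = nat_of_bool (sigma i == j).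
Hypothesis completeC : code_completable.

Lemma admissible_prefix_concat_traject a gamma : admissible A (a :: gamma) ->
  exists k n, prefix (a :: gamma) (concat_code omega (traject sigma k n)).
Proof.
move=> /completeC [eta [adm [[|k ks] dec]]]; first by rewrite /concat_code in dec.
have edgeE : code_edge =2 frel sigma.
  by move=> i j /=; rewrite code_matrix_sigma; case: (sigma i == j).
have : fpath sigma k ks.
  rewrite -(eq_path edgeE).
  by apply: (admissible_code_path codeC (pre := [::])); rewrite -dec.
by case/fpathP => n ks_def; exists k, n.+1; rewrite trajectS -ks_def -dec prefix_prefix.
Qed.

End PermutationCodeMatrix.

Lemma code_matrix_not_permutation :
  zero_one_matrix A -> irreducible_mx A -> ~ permutation_mx A ->
  is_code A omega -> code_completable -> ~ permutation_mx (code_matrix A omega).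
Proof.
move=> zoA irrA notpermA codeC completeC [sigma code_matrix_sigma].
have [a [b [c [neq_bc Aab Aac]]]] := not_permutation_mx_branching zoA irrA notpermA.
have [t [_ [ba_path last_t]]] := irrA b a.
pose w := loop_word a (b :: t) c.
have adm m : admissible A (w m).
  apply: (path_admissible (irreducible_mx_succ irrA)).
  have cycle_abt : path (fun u v => A u v == 1) a (b :: t) by rewrite /= Aab eqxx.
  by rewrite cat_path path_flatten_nseq ?last_flatten_nseq //= Aac.
have /fin_all_exists [k k_spec] : forall m : 'I_M.+1, exists k n,
    prefix (w m) (concat_code omega (traject sigma k n)).
  by move=> m; apply: (admissible_prefix_concat_traject codeC code_matrix_sigma completeC (adm m)).
have k_inj : injective k.
  move=> m m' eq_k; apply/val_inj/(loop_word_prefix_total_eq (a := a) (t := t) neq_bc).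
  have [n pn] := k_spec m; have [n' pn'] := k_spec m'.
  by rewrite eq_k in pn; apply: concat_traject_prefix_total pn pn'.
by have := leq_card k k_inj; rewrite !card_ord ltnn.
Qed.

End Codes.

Theorem mainTheorem6 (N M : nat) (A : 'M[nat]_N) (omega : 'I_M -> seq 'I_N) :
  zero_one_matrix A -> irreducible_mx A -> ~ permutation_mx A ->
  right_Markov_code A omega ->
  irreducible_mx (code_matrix A omega) /\ ~ permutation_mx (code_matrix A omega).
Proof.
move=> zoA irrA notpermA [[codeC _] extC _ connC].
split; first exact: code_matrix_irreducible.
apply: code_matrix_not_permutation => // gamma /extC [eta [_ [adm [ks [dec _]]]]].
by exists eta; split; last exists ks.
Qed.
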